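(* In the setting of the standard presentation of $\mathbb{A}_{\Gamma,u,k}$, let $w\in W$ be adjacent to $u$ with $e=\{u,w\}$, $m_e=2\ell_e$, and assume $\ell_e\equiv 0\pmod k$. Let $M_{B(w,u)}$ be the $k\times(k+1)$ matrix of Fox derivatives, evaluated in $\Lambda=\mathbb{C}[H_1(\mathbb{A}_{\Gamma,u,k})]$, of the $k$ relations (RB) for $w$ with respect to $w_0,\dots,w_{k-1},\bar u$. Let $\mathfrak p\subset\Lambda$ be the ideal generated by $1-t_{\bar u}t_{w,0}t_{w,1}\cdots t_{w,k-1}$, where $t_{\bar u},t_{w,i}$ are the homology classes of $\bar u,w_i$. Then $M_{B(w,u)}\otimes\Lambda/\mathfrak p$ has rank $1$.
   Context: Setting: $\Gamma=(V,E,m)$ finite simple graph with even labels $m_e=2\ell_e$; $\mathbb{A}_\Gamma=\langle V\mid (xy)^{\ell_e}=(yx)^{\ell_e},\ \{x,y\}\in E\rangle$. For $u\in V$, $k\ge2$, $\mathbb{A}_{\Gamma,u,k}=\ker(\mathbb{A}_\Gamma\to\mathbb{Z}_k,\ u\mapsto1,\ v\mapsto0\ (v\ne u))$. $V_{2,u}$ = vertices joined to $u$ by an edge of label 2, $W=V\setminus(\{u\}\cup V_{2,u})$. Standard presentation generators: $\bar u=u^k$, $v\in V_{2,u}$, $w_i=u^iwu^{-i}$ ($w\in W$, $0\le i<k$). The relations (RB) for $w\in W$ adjacent to $u$: for $0\le i<k$, $W_i\cdots W_{i+\ell_e-1}=W_{i+1}\cdots W_{i+\ell_e}$ with $W_j=\bar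 u^qw_s\bar u^{-q}$ for $j=qk+s$, $0\le s<k$. $H_1(\mathbb{A}_{\Gamma,u,k})$ is free abelian and when $k\mid\ell_e$ the classes $t_{\bar u},t_{w,0},\dots,t_{w,k-1}$ are independent; $\mathfrak p$ is prime and rank over $\Lambda/\mathfrak p$ means rank over its fraction field. Fox derivatives of $A=B$ are those of $AB^{-1}$. *)

From HB Require Import structures.
From mathcomp Require Import all_boot all_order all_algebra.
From mathcomp Require Import fraction.
Set Implicit Arguments. Unset Strict Implicit. Unset Printing Implicit Defensive.
Import Order.TTheory GRing.Theory Num.Theory.
Local Open Scope ring_scope.

Notation tofrac := (@FracField.tofrac _).

(* RF F n = F(y_0,...,y_{n-1}), built as iterated fraction fields of
   univariate polynomial rings.  The Laurent polynomial ring
   F[y_0^{+-1},...,y_{n-1}^{+-1}] is the subring [laurent] below. *)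
Fixpoint RF (F : fieldType) (n : nat) : fieldType :=
  match n with
  | 0 => F
  | n'.+1 => {fraction {poly RF F n'}}
  end.

Fixpoint cst (F : fieldType) (n : nat) : F -> RF F n :=
  match n return F -> RF F n with
  | 0 => fun c => c
  | n'.+1 => fun c => tofrac ((cst n' c)%:P)
  end.

(* the variable y_i in RF F n (y_i = 0 if i >= n, never used) *)
Fixpoint var (F : fieldType) (n : nat) (i : nat) : RF F n :=
  match n return RF F n with
  | 0 => 0
  | n'.+1 => if i == n' then tofrac ('X : {poly RF F n'})
             else tofrac ((var F n' i)%:P)
  end.

Definition laurent (F : fieldType) (n : nat) (g : RF F n) : Prop :=
  exists s : seq (F * {ffun 'I_n -> int}),
    g = \sum_(c <- s) cst n c.1 * \prod_(i < n) (var F n i) ^ (c.2 i).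

(* A word is a list of letters (generator, sign); sign true = x, false = x^-1. *)
Definition word (G : Type) := seq (G * bool).

Definition inv_word (G : Type) (w : word G) : word G :=
  rev [seq (x.1, ~~ x.2) | x <- w].

(* Fox derivative d w / d x, evaluated under a map t sending each generator to
   an invertible element of a field R (here the generators' homology classes):
   d(y w') = d y + t(y) d w',  d y = [y = x],  d(y^-1) = - [y = x] t(y)^-1. *)
Fixpoint fox (G : eqType) (R : fieldType) (t : G -> R) (x : G) (w : word G)
  : R :=
  match w with
  | [::] => 0
  | (y, b) :: w' =>
      (if b then (y == x)%:R else - ((y == x)%:R * (t y)^-1))
      + (if b then t y else (t y)^-1) * fox t x w'
  end.

Definition fox_rel (G : eqType) (R : fieldType) (t : G -> R) (x : G)
  (A B : word G) : R := fox t x (A ++ inv_word B).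

(* Generators involved: None = \bar u = u^k, Some s = w_s (0 <= s < k). *)
Definition gen (k : nat) := option 'I_k.

Definition Wj' (k : nat) (hk : (0 < k)%N) (j : nat) : word (gen k) :=
  nseq (j %/ k) (None, true)
  ++ [:: (Some (Ordinal (ltn_pmod j hk)), true)]
  ++ nseq (j %/ k) (None, false).

Definition Wprod (k : nat) (hk : (0 < k)%N) (a len : nat) : word (gen k) :=
  flatten [seq Wj' hk j | j <- iota a len].

Definition RB_lhs (k : nat) (hk : (0 < k)%N) (l i : nat) := Wprod hk i l.
Definition RB_rhs (k : nat) (hk : (0 < k)%N) (l i : nat) := Wprod hk i.+1 l.

(* Homology classes in Lambda' = F[t_{w,0}^{+-1},...,t_{w,k-1}^{+-1},
   t_{\bar u}^{+-1}] inside RF F k.+1:  t_{w,s} = y_s, t_{\bar u} = y_k. *)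
Definition tcls (F : fieldType) (k : nat) (g : gen k) : RF F k.+1 :=
  match g with
  | None => var F k.+1 k
  | Some s => var F k.+1 s
  end.

(* column j of M: j < k  ->  w_j ;  j = k  ->  \bar u *)
Definition col_gen (k : nat) (j : 'I_k.+1) : gen k :=
  match unlift ord_max j with
  | Some s => Some s
  | None => None
  end.

Definition M_B (F : fieldType) (k : nat) (hk : (0 < k)%N) (l : nat)
  : 'M[RF F k.+1]_(k, k.+1) :=
  \matrix_(i < k, j < k.+1)
    fox_rel (tcls F (k := k)) (col_gen j) (RB_lhs hk l i) (RB_rhs hk l i).

Definition in_p (F : fieldType) (k : nat) (g : RF F k.+1) : Prop :=
  exists h, laurent h /\
    g = (1 - var F k.+1 k * \prod_(s < k) var F k.+1 s) * h.

(* rank of (M tensor Lambda/p) over the fraction field of the domain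
   Lambda/p, for M with entries in Lambda: an element of Lambda is zero in
   Frac(Lambda/p) iff it lies in p, and the rank of a matrix over a field is
   the largest size of a non-vanishing minor. *)
Definition rank_mod (R : fieldType) (inP : R -> Prop) (m n : nat)
  (M : 'M[R]_(m, n)) (r : nat) : Prop :=
  (exists (f : 'I_r -> 'I_m) (g : 'I_r -> 'I_n), ~ inP (\det (mxsub f g M)))
  /\ (forall (f : 'I_r.+1 -> 'I_m) (g : 'I_r.+1 -> 'I_n),
        inP (\det (mxsub f g M))).

From HB Require Import structures.
From mathcomp Require Import all_boot all_order all_algebra.
From mathcomp Require Import fraction.
From mathcomp Require Import ring zify.
Set Implicit Arguments. Unset Strict Implicit. Unset Printing Implicit Defensive.
Import Order.TTheory GRing.Theory Num.Theory.
Local Open Scope ring_scope.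

(* Modulo p, t_{\bar u} = P^-1 where P = t_{w,0} ... t_{w,k-1}, and every Laurent
   polynomial can be evaluated at t_{\bar u} = P^-1 in K = F(t_{w,0}, ..., t_{w,k-1});
   so Lambda/p embeds into K and it suffices to compute the Fox matrix in K with
   t_{\bar u} := P^-1.  Write l = q k, x_j = t_{w, j mod k} and R_a = x_0 ... x_{a-1}.
   Both sides of each relation (RB) then have value P^q, and R_i times the derivative
   of W_i ... W_{i+l-1} with respect to w_r is a sum over j of
   R_j t_{\bar u}^(j div k) [j = r mod k], whose summand is k-periodic precisely
   because t_{\bar u} P = 1; the sum is q R_r.  So the w_r-entry of row i is
   q (R_i^-1 - R_{i+1}^-1) R_r, and the fundamental formula of Fox calculus forces the
   \bar u-entry to be the same row factor times (1 - P) / (t_{\bar u} - 1).  The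
   matrix thus has rank at most one, and its (0, 0) entry q (1 - t_{w,0}^-1) is
   non-zero in characteristic 0. *)

Lemma big_option (R : Type) (idx : R) (op : Monoid.com_law idx) (T : finType)
    (f : option T -> R) :
  \big[op/idx]_x f x = op (f None) (\big[op/idx]_y f (Some y)).
Proof.
rewrite (bigD1 None) //=; congr (op _ _).
by rewrite (reindex_omap Some id) //=; [apply: eq_bigl => y; rewrite eqxx | case].
Qed.

Lemma big_nat_periodic (R : Type) (idx : R) (op : Monoid.com_law idx)
    (f : nat -> R) n a :
  (forall j, f (j + n)%N = f j) ->
  \big[op/idx]_(a <= j < a + n) f j = \big[op/idx]_(0 <= j < n) f j.
Proof.
move=> f_per; elim: a => [|a IH]; first by rewrite add0n.
rewrite -IH; case: n f_per {IH} => [|n] f_per; first by rewrite !addn0 !big_geq.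
rewrite [RHS](big_ltn (m := a)); last by lia.
by rewrite addSn addnS big_nat_recr /=; [rewrite -addnS f_per Monoid.mulmC | lia].
Qed.

Lemma det_rank_one (R : fieldType) n (a b : 'I_n.+2 -> R) :
  \det (\matrix_(i, j) (a i * b j)) = 0.
Proof.
have -> : \matrix_(i, j) (a i * b j) = \col_i a i *m \row_j b j.
  by apply/matrixP => i j; rewrite !mxE big_ord1 !mxE.
apply/eqP; apply: contraT => /negPf det_neq0.
have := leq_trans (mxrankM_maxl _ (\row_j b j)) (rank_leq_col (\col_i a i)).
by rewrite mxrank_unit // unitmxE unitfE det_neq0.
Qed.

Section FoxCalculus.
Variables (G : eqType) (K : fieldType) (t : G -> K).
Hypothesis t_neq0 : forall y, t y != 0.

Definition letter_val (y : G * bool) : K := if y.2 then t y.1 else (t y.1)^-1.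
Definition word_val (w : word G) : K := \prod_(y <- w) letter_val y.

Lemma word_val_neq0 w : word_val w != 0.
Proof.
by rewrite prodf_seq_neq0; apply/allP => -[y []] _; rewrite /= ?invr_eq0 t_neq0.
Qed.

Lemma word_val_cat u v : word_val (u ++ v) = word_val u * word_val v.
Proof. exact: big_cat. Qed.

Lemma word_val_nseq n y : word_val (nseq n y) = letter_val y ^+ n.
Proof. by rewrite /word_val big_nseq -Monoid.iteropE. Qed.

Lemma word_val_inv w : word_val (inv_word w) = (word_val w)^-1.
Proof.
rewrite /word_val /inv_word big_rev big_map -prodfV.
by apply: eq_bigr => -[y []]; rewrite /letter_val /= ?invrK.
Qed.

Lemma fox_cat x u v : fox t x (u ++ v) = fox t x u + word_val u * fox t x v.
Proof.
elim: u => [|[y b] u IH] /=; first by rewrite /word_val big_nil add0r mul1r.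
by rewrite IH /word_val big_cons mulrDr addrA mulrA.
Qed.

Lemma fox_nseq_neq x z b n : z != x -> fox t x (nseq n (z, b)) = 0.
Proof.
move/negbTE=> zx; elim: n => //= n ->.
by rewrite zx mulr0 addr0; case: b; rewrite /= ?mul0r ?oppr0.
Qed.

Lemma fox_inv_word x w : fox t x (inv_word w) = - (word_val w)^-1 * fox t x w.
Proof.
elim: w => [|[y b] w IH]; first by rewrite /= mulr0.
rewrite /inv_word /= rev_cons -cats1 fox_cat -/(inv_word w) IH word_val_inv.
rewrite /word_val big_cons -/(word_val w) /letter_val /=.
have := word_val_neq0 w; have := t_neq0 y.
by case: b => /= ty_neq0 w_neq0; rewrite mulr0 addr0; field; rewrite ty_neq0 w_neq0.
Qed.

Lemma fox_rel_eq x A B : word_val A = word_val B ->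
  fox_rel t x A B = fox t x A - fox t x B.
Proof.
move=> eqAB; rewrite /fox_rel fox_cat fox_inv_word eqAB mulrA mulrN.
by rewrite mulfV ?word_val_neq0 // mulN1r.
Qed.

End FoxCalculus.

Section FoxFundamentalFormula.
Variables (G : finType) (K : fieldType) (t : G -> K).
Hypothesis t_neq0 : forall y, t y != 0.

Lemma fox_fundamental w : \sum_x fox t x w * (t x - 1) = word_val t w - 1.
Proof.
elim: w => [|[y b] w IH] /=.
  by rewrite /word_val big_nil subrr big1 // => x _; rewrite mul0r.
rewrite /word_val big_cons -/(word_val t w) /letter_val /=.
under eq_bigr => x _ do rewrite mulrDl -mulrA.
rewrite big_split /= -mulr_sumr IH.
have sum_delta (f : G -> K) : \sum_x (y == x)%:R * f x = f y.
  rewrite (bigD1 y) //= eqxx mul1r big1 ?addr0 // => x.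
  by rewrite eq_sym => /negbTE ->; rewrite mul0r.
case: b => /=; first by rewrite sum_delta; ring.
under eq_bigr => x _ do rewrite mulNr mulrAC -mulrA.
by rewrite sumrN sum_delta; field; rewrite t_neq0.
Qed.

Lemma fox_rel_fundamental A B : word_val t A = word_val t B ->
  \sum_x fox_rel t x A B * (t x - 1) = 0.
Proof.
move=> eqAB; rewrite /fox_rel fox_fundamental word_val_cat word_val_inv eqAB.
by rewrite mulfV ?word_val_neq0 ?subrr.
Qed.

End FoxFundamentalFormula.

Section RBFoxDerivatives.
Variables (K : fieldType) (k : nat) (hk : (0 < k)%N) (x : 'I_k -> K) (U : K).
Hypotheses (x_neq0 : forall s, x s != 0) (U_neq0 : U != 0).

Definition gen_val (g : gen k) : K := if g is Some s then x s else U.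

Lemma gen_val_neq0 g : gen_val g != 0.
Proof. by case: g. Qed.

Definition xmod (j : nat) : K := x (Ordinal (ltn_pmod j hk)).
Definition xprefix (a : nat) : K := \prod_(0 <= j < a) xmod j.
Definition xall : K := \prod_s x s.

Lemma xmod_ord (s : 'I_k) : xmod s = x s.
Proof. by congr x; apply: val_inj; rewrite /= modn_small. Qed.

Lemma xmodDk j : xmod (j + k) = xmod j.
Proof. by congr x; apply: val_inj; rewrite /= modnDr. Qed.

Lemma xprefix_neq0 a : xprefix a != 0.
Proof. by rewrite prodf_seq_neq0; apply/allP => j _; apply: x_neq0. Qed.

Lemma xprefix0 : xprefix 0 = 1.
Proof. by rewrite /xprefix big_geq. Qed.

Lemma xprefixS a : xprefix a.+1 = xprefix a * xmod a.
Proof. by rewrite /xprefix big_nat_recr. Qed.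

Lemma xprefixDk a : xprefix (a + k) = xprefix a * xall.
Proof.
rewrite /xprefix (big_cat_nat (n := a)) ?leq_addr //=.
rewrite (big_nat_periodic _ a xmodDk
  : \prod_(a <= j < a + k) xmod j = \prod_(0 <= j < k) xmod j).
by congr (_ * _); rewrite big_mkord; apply: eq_bigr => s _; rewrite xmod_ord.
Qed.

Lemma xprefixDMk a q : xprefix (a + q * k) = xprefix a * xall ^+ q.
Proof.
elim: q => [|q IH]; first by rewrite addn0 mulr1.
by rewrite mulSnr addnA xprefixDk IH exprSr mulrA.
Qed.

Lemma sum_xprefix : \sum_(s < k) xprefix s * (x s - 1) = xall - 1.
Proof.
rewrite -[xall]mul1r -xprefix0 -xprefixDk xprefix0 -[1 in RHS]xprefix0.
rewrite -(telescope_sumr _ (leq0n k)) big_mkord; apply: eq_bigr => s _.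
by rewrite xprefixS xmod_ord mulrBr mulr1.
Qed.

Lemma word_val_Wj j : word_val gen_val (Wj' hk j) = xmod j.
Proof.
rewrite /Wj' !word_val_cat !word_val_nseq /word_val big_seq1 /letter_val /=.
by rewrite mulrCA -exprMn divff // expr1n mulr1.
Qed.

Lemma fox_Wj r j :
  fox gen_val (Some r) (Wj' hk j) = U ^+ (j %/ k) * ((j %% k)%N == r)%:R.
Proof.
rewrite /Wj' !fox_cat !fox_nseq_neq // word_val_nseq /=.
by rewrite !mulr0 !addr0 add0r.
Qed.

Lemma WprodS a n : Wprod hk a n.+1 = Wprod hk a n ++ Wj' hk (a + n).
Proof. by rewrite /Wprod -addn1 iotaD map_cat flatten_cat /= cats0. Qed.

Lemma word_val_Wprod a n :
  xprefix a * word_val gen_val (Wprod hk a n) = xprefix (a + n).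
Proof.
elim: n => [|n IH]; first by rewrite addn0 /word_val big_nil mulr1.
by rewrite WprodS word_val_cat word_val_Wj mulrA IH addnS xprefixS.
Qed.

Lemma fox_Wprod g a n : xprefix a * fox gen_val g (Wprod hk a n) =
  \sum_(a <= j < a + n) xprefix j * fox gen_val g (Wj' hk j).
Proof.
elim: n => [|n IH]; first by rewrite addn0 big_geq // mulr0.
rewrite WprodS fox_cat mulrDr IH mulrA word_val_Wprod addnS big_nat_recr //=.
exact: leq_addr.
Qed.

Hypothesis U_xall : U * xall = 1.

Definition fox_term (r : 'I_k) (j : nat) : K :=
  xprefix j * U ^+ (j %/ k) * ((j %% k)%N == r)%:R.

Lemma fox_termDk r j : fox_term r (j + k) = fox_term r j.
Proof.
rewrite /fox_term xprefixDk addnC -{1 3}(mul1n k) divnMDl // modnMDl add1n exprS.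
by rewrite -[RHS]mulr1 -U_xall; ring.
Qed.

Lemma sum_fox_term r a q :
  \sum_(a <= j < a + q * k) fox_term r j = q%:R * xprefix r.
Proof.
have fox_termDMk j : fox_term r (j + q * k) = fox_term r j.
  by elim: q => [|q IH]; rewrite ?addn0 // mulSnr addnA fox_termDk.
rewrite (big_nat_periodic _ a fox_termDMk); elim: q {fox_termDMk} => [|q IH].
  by rewrite big_geq // mul0r.
rewrite mulSnr (big_cat_nat (n := q * k)) ?leq_addr //= IH.
rewrite (big_nat_periodic _ (q * k) (fox_termDk r)).
rewrite big_mkord (bigD1 r) //= big1 ?addr0 => [|j jr].
  by rewrite /fox_term divn_small // modn_small // eqxx expr0 !mulr1 mulrSr mulrDl mul1r.
by rewrite /fox_term modn_small // (negbTE (jr : j != r :> nat)) mulr0.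
Qed.

Lemma word_val_Wprod_qk a q : word_val gen_val (Wprod hk a (q * k)) = xall ^+ q.
Proof.
apply: (mulfI (xprefix_neq0 a)); exact: etrans (word_val_Wprod _ _) (xprefixDMk _ _).
Qed.

Lemma fox_Wprod_qk r a q :
  fox gen_val (Some r) (Wprod hk a (q * k)) = q%:R * xprefix r / xprefix a.
Proof.
apply: (mulfI (xprefix_neq0 a)); rewrite fox_Wprod mulrC divfK ?xprefix_neq0 //.
by rewrite -(sum_fox_term r a); apply: eq_bigr => j _; rewrite fox_Wj mulrA.
Qed.

Definition RB_fox (q i : nat) (g : gen k) : K :=
  fox_rel gen_val g (Wprod hk i (q * k)) (Wprod hk i.+1 (q * k)).

Definition RB_row (q i : nat) : K := q%:R * ((xprefix i)^-1 - (xprefix i.+1)^-1).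

Definition RB_col (g : gen k) : K :=
  if g is Some r then xprefix r else (1 - xall) / (U - 1).

Lemma RB_fox_Some q i r : RB_fox q i (Some r) = RB_row q i * RB_col (Some r).
Proof.
rewrite /RB_fox fox_rel_eq ?word_val_Wprod_qk //; last exact: gen_val_neq0.
by rewrite !fox_Wprod_qk /RB_row /=; ring.
Qed.

Hypothesis xall_neq1 : xall != 1.

Lemma RB_fox_None q i : RB_fox q i None = RB_row q i * RB_col None.
Proof.
have U_neq1 : U - 1 != 0.
  by rewrite subr_eq0; apply: contra xall_neq1 => /eqP U1; rewrite -U_xall U1 mul1r.
have := fox_rel_fundamental gen_val_neq0
  (etrans (word_val_Wprod_qk i q) (esym (word_val_Wprod_qk i.+1 q))).
rewrite big_option -/(RB_fox q i None).
under eq_bigr => s _ do rewrite -/(RB_fox q i (Some s)) RB_fox_Some -mulrA.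
rewrite -mulr_sumr sum_xprefix /= => fundamental.
apply: (mulIf U_neq1); rewrite mulrA divfK //.
by apply/eqP; rewrite -subr_eq0 -fundamental; apply/eqP; ring.
Qed.

Lemma RB_fox_rank_one q i g : RB_fox q i g = RB_row q i * RB_col g.
Proof. by case: g => [r|]; rewrite ?RB_fox_Some ?RB_fox_None. Qed.

End RBFoxDerivatives.

Section RationalFunctions.
Variable F : fieldType.

Lemma cst1 n : cst n 1 = 1 :> RF F n.
Proof. by elim: n => //= n ->; rewrite rmorph1. Qed.

Lemma cstN n a : cst n (- a) = - cst n a :> RF F n.
Proof. by elim: n => //= n ->; rewrite polyCN rmorphN. Qed.

Lemma cstM n a b : cst n (a * b) = cst n a * cst n b :> RF F n.
Proof. by elim: n => //= n ->; rewrite polyCM rmorphM. Qed.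

Lemma var_neq0 n i : (i < n)%N -> var F n i != 0.
Proof.
elim: n => //= n IH lt_i_n; case: ifP => [_|/negbT neq_i_n].
  by rewrite tofrac_eq0 polyX_eq0.
by rewrite tofrac_eq0 polyC_eq0 IH // ltn_neqAle neq_i_n -ltnS.
Qed.

Lemma var0_neq1 n : (0 < n)%N -> var F n 0 != 1.
Proof.
elim: n => //= n IH _; case: ifP => [_|n_neq0]; rewrite -tofrac1 tofrac_eq.
  by apply/eqP => /(congr1 (horner^~ 0)) /eqP; rewrite hornerX hornerC eq_sym oner_eq0.
by rewrite -polyC1 (inj_eq polyC_inj) IH //; case: n n_neq0 {IH}.
Qed.

Lemma prod_var_neq1 n : (0 < n)%N -> \prod_(i < n) var F n i != 1.
Proof.
case: n => // n _; rewrite big_ord_recr /= eqxx -tofrac1.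
rewrite (eq_bigr (fun i : 'I_n => tofrac (var F n i)%:P)) => [|i _]; last first.
  by rewrite /= (ltn_eqF (ltn_ord i)).
rewrite -!rmorph_prod -rmorphM tofrac_eq; apply/eqP => /(congr1 (horner^~ 0)) /eqP.
by rewrite hornerMX mulr0 hornerC eq_sym oner_eq0.
Qed.

End RationalFunctions.

Lemma natr_RF_neq0 (F : numFieldType) n m : (0 < m)%N -> (m%:R : RF F n) != 0.
Proof.
move=> m_gt0; elim: n => [|n IH] /=; first by rewrite pnatr_eq0 -lt0n.
have -> : (m%:R : RF F n.+1) = tofrac ((m%:R : RF F n)%:P).
  by rewrite polyC_natr rmorph_nat.
by rewrite tofrac_eq0 polyC_eq0.
Qed.

Section LaurentPolynomials.
Variables (F : fieldType) (n : nat).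

Definition monomial (c : F * {ffun 'I_n -> int}) : RF F n :=
  cst n c.1 * \prod_(i < n) var F n i ^ c.2 i.

Lemma laurent_monomial c : laurent (monomial c).
Proof. by exists [:: c]; rewrite big_seq1. Qed.

Lemma laurent0 : laurent (0 : RF F n).
Proof. by exists [::]; rewrite big_nil. Qed.

Lemma laurentD (a b : RF F n) : laurent a -> laurent b -> laurent (a + b).
Proof. by move=> [s ->] [s' ->]; exists (s ++ s'); rewrite big_cat. Qed.

Lemma laurentN (a : RF F n) : laurent a -> laurent (- a).
Proof.
move=> [s ->]; exists [seq (- c.1, c.2) | c <- s].
by rewrite big_map -sumrN; apply: eq_bigr => c _; rewrite cstN mulNr.
Qed.

Definition monomial_mul (c c' : F * {ffun 'I_n -> int}) : F * {ffun 'I_n -> int} :=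
  (c.1 * c'.1, [ffun i => c.2 i + c'.2 i]).

Lemma monomialM c c' : monomial c * monomial c' = monomial (monomial_mul c c').
Proof.
rewrite /monomial /= cstM mulrACA -big_split /=; congr (_ * _).
by apply: eq_bigr => i _; rewrite ffunE exprzDr // unitfE var_neq0.
Qed.

Lemma laurentM (a b : RF F n) : laurent a -> laurent b -> laurent (a * b).
Proof.
move=> [s ->] [s' ->]; exists [seq monomial_mul c c' | c <- s, c' <- s'].
rewrite big_allpairs_dep big_distrlr /=.
by apply: eq_bigr => c _; apply: eq_bigr => c' _; rewrite monomialM.
Qed.

Lemma laurent_var_exp i (e : int) : (i < n)%N -> laurent (var F n i ^ e).
Proof.
move=> lt_i_n; pose i' := Ordinal lt_i_n.
have -> : var F n i ^ e = monomial (1, [ffun j => if j == i' then e else 0]).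
  rewrite /monomial /= cst1 mul1r (bigD1 i') //= ffunE eqxx big1 ?mulr1 //.
  by move=> j /negbTE j_neq; rewrite ffunE j_neq expr0z.
exact: laurent_monomial.
Qed.

Lemma laurent1 : laurent (1 : RF F n).
Proof.
have -> : 1 = monomial (1, [ffun => 0]).
  by rewrite /monomial /= cst1 mul1r big1 // => i _; rewrite ffunE expr0z.
exact: laurent_monomial.
Qed.

Lemma laurent_var i : (i < n)%N -> laurent (var F n i).
Proof. by move=> lt_i_n; rewrite -[var F n i]expr1z; exact: laurent_var_exp. Qed.

Lemma laurent_varV i : (i < n)%N -> laurent (var F n i)^-1.
Proof. by move=> lt_i_n; rewrite -exprN1; exact: laurent_var_exp. Qed.

Lemma laurent_prod (I : Type) (r : seq I) (f : I -> RF F n) :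
  (forall i, laurent (f i)) -> laurent (\prod_(i <- r) f i).
Proof. by move=> lf; apply: big_ind => //; [exact: laurent1 | exact: laurentM]. Qed.

Lemma laurent_nat m : laurent (m%:R : RF F n).
Proof.
elim: m => [|m IH]; first exact: laurent0.
by rewrite mulrS; apply: laurentD IH; exact: laurent1.
Qed.

End LaurentPolynomials.

Section FractionValue.
Variables (K : fieldType) (c : K).

Definition frac_value (g : {fraction {poly K}}) (v : K) :=
  exists a b : {poly K}, [/\ b.[c] != 0, g = tofrac a / tofrac b & v = a.[c] / b.[c]].

Lemma tofrac_neq0_horner (b : {poly K}) : b.[c] != 0 -> tofrac b != 0.
Proof. by apply: contra; rewrite tofrac_eq0 => /eqP ->; rewrite horner0. Qed.

Lemma frac_value_poly a : frac_value (tofrac a) a.[c].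
Proof. by exists a, 1; rewrite hornerC tofrac1 !divr1 oner_eq0. Qed.

Lemma frac_value1 : frac_value 1 1.
Proof. by have := frac_value_poly 1; rewrite tofrac1 hornerC. Qed.

Lemma frac_valueX : frac_value (tofrac 'X) c.
Proof. by have := frac_value_poly 'X; rewrite hornerX. Qed.

Lemma frac_value_uniq g v v' : frac_value g v -> frac_value g v' -> v = v'.
Proof.
move=> [a [b [b_neq0 -> ->]]] [a' [b' [b'_neq0 /eqP + ->]]].
rewrite eqr_div ?tofrac_neq0_horner // -!tofracM tofrac_eq.
move=> /eqP /(congr1 (horner^~ c)); rewrite !hornerM => /eqP.
by rewrite -eqr_div // => /eqP.
Qed.

Lemma frac_valueD g g' v v' :
  frac_value g v -> frac_value g' v' -> frac_value (g + g') (v + v').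
Proof.
move=> [a [b [b_neq0 -> ->]]] [a' [b' [b'_neq0 -> ->]]].
exists (a * b' + a' * b), (b * b'); split.
- by rewrite hornerM mulf_neq0.
- by rewrite tofracD !tofracM addf_div ?tofrac_neq0_horner.
- by rewrite hornerD !hornerM addf_div.
Qed.

Lemma frac_valueN g v : frac_value g v -> frac_value (- g) (- v).
Proof.
move=> [a [b [b_neq0 -> ->]]]; exists (- a), b.
by rewrite tofracN hornerN !mulNr.
Qed.

Lemma frac_valueM g g' v v' :
  frac_value g v -> frac_value g' v' -> frac_value (g * g') (v * v').
Proof.
move=> [a [b [b_neq0 -> ->]]] [a' [b' [b'_neq0 -> ->]]].
exists (a * a'), (b * b'); split.
- by rewrite hornerM mulf_neq0.
- by rewrite !tofracM mulf_div.
- by rewrite !hornerM mulf_div.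
Qed.

Lemma frac_valueV g v : frac_value g v -> v != 0 -> frac_value g^-1 v^-1.
Proof.
move=> [a [b [b_neq0 -> ->]]] v_neq0; exists b, a; rewrite !invfM !invrK !(mulrC (_^-1)).
by split=> //; apply: contra v_neq0 => /eqP ->; rewrite mul0r.
Qed.

Lemma frac_value_expz g v (e : int) :
  frac_value g v -> v != 0 -> frac_value (g ^ e) (v ^ e).
Proof.
move=> gv v_neq0; have gvn m : frac_value (g ^+ m) (v ^+ m).
  by elim: m => [|m IH]; rewrite ?expr0 ?exprS; [exact: frac_value1 | apply: frac_valueM].
by case: e => m /=; [exact: gvn | apply: frac_valueV; rewrite ?expf_neq0].
Qed.

End FractionValue.

Section ReductionModP.
Variables (F : fieldType) (k : nat).
Local Notation K := (RF F k).
Local Notation tw := (fun s : 'I_k => var F k s).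
Local Notation P := (\prod_(s < k) var F k s).

Definition embedRF : {rmorphism K -> RF F k.+1} :=
  (@FracField.tofrac {poly K} \o polyC)%FUN.

Lemma embedRF_var (i : 'I_k) : embedRF (var F k i) = var F k.+1 i.
Proof. by rewrite /= (ltn_eqF (ltn_ord i)). Qed.

Lemma embedRF_P : embedRF P = \prod_(s < k) var F k.+1 s.
Proof. by rewrite rmorph_prod; apply: eq_bigr => i _; exact: embedRF_var. Qed.

Lemma var_top : var F k.+1 k = tofrac 'X.
Proof. by rewrite /= eqxx. Qed.

Lemma P_neq0 : P != 0.
Proof. by rewrite prodf_seq_neq0; apply/allP => s _; apply: var_neq0. Qed.

Definition p_gen : RF F k.+1 := 1 - var F k.+1 k * \prod_(s < k) var F k.+1 s.

Lemma p_genE : p_gen = 1 - tofrac 'X * embedRF P.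
Proof. by rewrite /p_gen embedRF_P var_top. Qed.

Lemma laurent_p_gen : laurent p_gen.
Proof.
apply: laurentD; first exact: laurent1.
apply/laurentN/laurentM; first exact: laurent_var.
by apply: laurent_prod => s; apply/laurent_var/leqW.
Qed.

Lemma frac_value_embedRF s : frac_value P^-1 (embedRF s) s.
Proof. by have := frac_value_poly P^-1 s%:P; rewrite hornerC. Qed.

Lemma frac_value_p_gen : frac_value P^-1 p_gen 0.
Proof.
have -> : 0 = 1 - P^-1 * P :> K by rewrite mulVf ?P_neq0 ?subrr.
rewrite p_genE; apply: frac_valueD (frac_valueN (frac_valueM _ (frac_value_embedRF _))).
  exact: frac_value1.
exact: frac_valueX.
Qed.

Lemma frac_value_var (i : 'I_k.+1) :
  exists2 v, v != 0 & frac_value P^-1 (var F k.+1 i) v.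
Proof.
rewrite /=; case: ifP => [_|i_neq_k].
  by exists P^-1; [rewrite invr_eq0 P_neq0 | exact: frac_valueX].
exists (var F k i); last exact: frac_value_embedRF.
by apply: var_neq0; rewrite ltn_neqAle i_neq_k -ltnS ltn_ord.
Qed.

Lemma frac_value_laurent (h : RF F k.+1) : laurent h -> exists v, frac_value P^-1 h v.
Proof.
pose has_value g := exists v, frac_value P^-1 g v.
have has_valueD g g' : has_value g -> has_value g' -> has_value (g + g').
  by move=> [v gv] [v' gv']; exists (v + v'); exact: frac_valueD.
have has_valueM g g' : has_value g -> has_value g' -> has_value (g * g').
  by move=> [v gv] [v' gv']; exists (v * v'); exact: frac_valueM.
move=> [s ->]; apply: (big_ind has_value) => [||c _]; last first.
- apply: (has_valueM); first by exists (cst k c.1); exact: frac_value_embedRF.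
  apply: (big_ind has_value) => [||i _]; [by exists 1; exact: frac_value1 | exact: has_valueM |].
  by have [v v_neq0 hv] := frac_value_var i; exists (v ^ c.2 i); exact: frac_value_expz.
- exact: has_valueD.
- by exists 0; have := frac_value_poly P^-1 0; rewrite tofrac0 hornerC.
Qed.

Lemma in_p_frac_value (g : RF F k.+1) v : in_p g -> frac_value P^-1 g v -> v = 0.
Proof.
move=> [h [lh ->]] gv; have [w hw] := frac_value_laurent lh.
by apply: frac_value_uniq gv _; rewrite -(mul0r w); exact: frac_valueM frac_value_p_gen hw.
Qed.

Lemma in_p0 : in_p (0 : RF F k.+1).
Proof. by exists 0; rewrite mulr0; split; first exact: laurent0. Qed.

Lemma in_pD (a b : RF F k.+1) : in_p a -> in_p b -> in_p (a + b).
Proof.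
move=> [h [lh ->]] [h' [lh' ->]]; exists (h + h'); rewrite mulrDr.
by split; first exact: laurentD.
Qed.

Lemma in_pN (a : RF F k.+1) : in_p a -> in_p (- a).
Proof.
by move=> [h [lh ->]]; exists (- h); rewrite mulrN; split; first exact: laurentN.
Qed.

Lemma in_pMr (a b : RF F k.+1) : in_p a -> laurent b -> in_p (a * b).
Proof.
by move=> [h [lh ->]] lb; exists (h * b); rewrite mulrA; split; first exact: laurentM.
Qed.

Lemma in_p_gen : in_p p_gen.
Proof. by exists 1; rewrite mulr1; split; first exact: laurent1. Qed.

Lemma in_p_laurent (a : RF F k.+1) : in_p a -> laurent a.
Proof. by move=> [h [lh ->]]; apply: laurentM laurent_p_gen lh. Qed.

Definition congr_p (g : RF F k.+1) (s : K) := laurent g /\ in_p (g - embedRF s).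

Lemma congr_p_embedRF s : laurent (embedRF s) -> congr_p (embedRF s) s.
Proof. by move=> ls; split; rewrite ?subrr; [exact: ls | exact: in_p0]. Qed.

Lemma congr_pD g g' s s' : congr_p g s -> congr_p g' s' -> congr_p (g + g') (s + s').
Proof.
move=> [lg gs] [lg' gs']; split; first exact: laurentD.
by rewrite rmorphD opprD addrACA; exact: in_pD.
Qed.

Lemma congr_pN g s : congr_p g s -> congr_p (- g) (- s).
Proof.
move=> [lg gs]; split; first exact: laurentN.
by rewrite rmorphN -opprD; exact: in_pN.
Qed.

Lemma congr_pM g g' s s' : congr_p g s -> congr_p g' s' -> congr_p (g * g') (s * s').
Proof.
move=> [lg gs] [lg' gs']; split; first exact: laurentM.
have -> : g * g' - embedRF (s * s') = (g - embedRF s) * g' + g * (g' - embedRF s')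
    - (g - embedRF s) * (g' - embedRF s') by rewrite rmorphM; ring.
apply/in_pD/in_pN; last exact/in_pMr/in_p_laurent.
by apply: in_pD; [exact: in_pMr | rewrite mulrC; exact: in_pMr].
Qed.

Lemma congr_p_in_p (g : RF F k.+1) s : congr_p g s -> in_p g <-> s = 0.
Proof.
move=> [lg gs]; split => [pg | s0]; last by rewrite s0 rmorph0 subr0 in gs.
apply: in_p_frac_value (frac_value_embedRF s).
by rewrite -[embedRF s](subKr g); apply: in_pD pg (in_pN gs).
Qed.

Lemma congr_p_nat m : congr_p m%:R m%:R.
Proof.
rewrite -(rmorph_nat embedRF); apply: congr_p_embedRF.
by rewrite rmorph_nat; exact: laurent_nat.
Qed.

Lemma congr_p_var (i : 'I_k) : congr_p (var F k.+1 i) (var F k i).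
Proof.
rewrite -embedRF_var; apply: congr_p_embedRF.
by rewrite embedRF_var; apply/laurent_var/leqW.
Qed.

Lemma congr_p_varV (i : 'I_k) : congr_p (var F k.+1 i)^-1 (var F k i)^-1.
Proof.
rewrite -embedRF_var -fmorphV; apply: congr_p_embedRF.
by rewrite fmorphV embedRF_var; apply/laurent_varV/leqW.
Qed.

Lemma congr_p_top : congr_p (var F k.+1 k) P^-1.
Proof.
split; first exact: laurent_var.
have -> : var F k.+1 k - embedRF P^-1 = p_gen * - embedRF P^-1.
  rewrite p_genE -var_top mulrBl mul1r mulrN opprK -mulrA -rmorphM.
  by rewrite mulfV ?P_neq0 // rmorph1 mulr1 addrC.
apply: in_pMr; first exact: in_p_gen.
apply: laurentN; rewrite fmorphV embedRF_P -prodfV.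
by apply: laurent_prod => s; apply/laurent_varV/leqW.
Qed.

Lemma congr_p_topV : congr_p (var F k.+1 k)^-1 P.
Proof.
split; first exact: laurent_varV.
have -> : (var F k.+1 k)^-1 - embedRF P = p_gen * (var F k.+1 k)^-1.
  by rewrite /p_gen -embedRF_P mulrBl mul1r mulrAC mulfV ?var_neq0 // mul1r.
by apply: in_pMr; [exact: in_p_gen | exact: laurent_varV].
Qed.

Lemma congr_p_fox g w :
  congr_p (fox (tcls F (k:=k)) g w) (fox (gen_val tw P^-1) g w).
Proof.
elim: w => [|[y b] w IH] /=; first exact: congr_p_nat 0.
have ty : congr_p (tcls F y) (gen_val tw P^-1 y).
  by case: y => [s|]; [exact: congr_p_var | exact: congr_p_top].
have tyV : congr_p (tcls F y)^-1 (gen_val tw P^-1 y)^-1.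
  by case: y {ty} => [s|] /=; [exact: congr_p_varV | rewrite invrK; exact: congr_p_topV].
case: b; apply: congr_pD; try exact: congr_pM IH.
- exact: congr_p_nat.
- by apply/congr_pN/congr_pM; [exact: congr_p_nat | exact: tyV].
Qed.

Lemma congr_p_det n (A : 'M[RF F k.+1]_n) (B : 'M[K]_n) :
  (forall i j, congr_p (A i j) (B i j)) -> congr_p (\det A) (\det B).
Proof.
move=> congrAB; apply: (big_ind2 congr_p) => [|g c g' c'|s _]; first exact: congr_p_nat 0.
  exact: congr_pD.
apply: congr_pM.
  by case: (perm.odd_perm s); [exact: congr_pN (congr_p_nat 1) | exact: congr_p_nat 1].
apply: (big_ind2 congr_p) => [|g c g' c'|i _]; first exact: congr_p_nat 1.
  exact: congr_pM.
exact: congrAB.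
Qed.

Lemma rank_mod_congr_rank_one m n (M : 'M[RF F k.+1]_(m, n)) (a : 'I_m -> K)
    (b : 'I_n -> K) i0 j0 :
  (forall i j, congr_p (M i j) (a i * b j)) -> a i0 * b j0 != 0 ->
  rank_mod (@in_p F k) M 1.
Proof.
move=> congrM ab_neq0.
have congr_minor r (f : 'I_r -> 'I_m) (g : 'I_r -> 'I_n) :
    congr_p (\det (mxsub f g M)) (\det (\matrix_(i, j) (a (f i) * b (g j)))).
  by apply: congr_p_det => i j; rewrite !mxE.
split=> [|f g]; last by apply/(congr_p_in_p (congr_minor _ f g)); exact: det_rank_one.
exists (fun=> i0), (fun=> j0) => /(congr_p_in_p (congr_minor _ _ _)) /eqP.
by rewrite det_mx11 mxE; exact/negP.
Qed.

Variable hk : (0 < k)%N.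

Lemma col_gen0 : col_gen (ord0 : 'I_k.+1) = Some (Ordinal hk).
Proof.
rewrite /col_gen; case: unliftP => [j /(congr1 val) /=|/(congr1 val) /=].
  by rewrite /bump leqNgt ltn_ord add0n => j0; congr Some; apply: val_inj.
by case: k hk.
Qed.

Lemma congr_p_M_B q i j :
  congr_p (M_B F hk (q * k) i j)
    (RB_row hk tw q i * RB_col hk tw P^-1 (col_gen j)).
Proof.
rewrite mxE -RB_fox_rank_one; first exact: congr_p_fox.
- by move=> s; apply: var_neq0.
- by rewrite invr_eq0 P_neq0.
- by rewrite mulVf ?P_neq0.
- exact: prod_var_neq1.
Qed.

End ReductionModP.

Theorem lemma2p12 (F : numClosedFieldType) (k l : nat) (hk : (0 < k)%N) :
  (1 < k)%N -> (0 < l)%N -> (k %| l)%N ->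
  rank_mod (@in_p F k) (M_B F hk l) 1.
Proof.
move=> _ l_gt0 /dvdnP [q def_l]; subst l.
have q_gt0 : (0 < q)%N by move: l_gt0; rewrite muln_gt0 => /andP [].
apply: (rank_mod_congr_rank_one (congr_p_M_B F hk q) (i0 := Ordinal hk) (j0 := ord0)).
rewrite col_gen0 /RB_row /= xprefix0 xprefixS xprefix0 mul1r invr1 mulr1.
rewrite mulf_neq0 ?natr_RF_neq0 // subr_eq0 eq_sym invr_eq1 /xmod /= mod0n.
exact: var0_neq1.
Qed.
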